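(* If the genus function $g$ satisfies $g(n)\gg n/\log n$, then $\left(|\mathrm{Hered}(\mathcal F^g)_n|/n!\right)^{1/n}\to\infty$ as $n\to\infty$.
   Context: All graphs are finite and simple; $\mathcal B_n$ is the set of graphs in a class $\mathcal B$ on vertex set $[n]$. A genus function is $g:\mathbb N\to\mathbb N_0$. $\mathcal F^g$ is the class of graphs $G$ such that, if $G$ has $n$ vertices, every cellular embedding of $G$ has Euler genus at most $g(n)$; equivalently the cycle rank $e(G)-v(G)+\kappa(G)$ is at most $g(n)$ ($\kappa(G)$ = number of components). $\mathrm{Hered}(\mathcal B)$ is the class of graphs $G$ with $G[W]\in\mathcal B$ for every nonempty $W\subseteq V(G)$ (so for $G[W]$ the relevant bound is $g(|W|)$). $x\ll y$ means $x/y\to0$. *)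

From mathcomp Require Import all_boot.
From Stdlib Require Import Reals.

Set Implicit Arguments.
Unset Strict Implicit.
Unset Printing Implicit Defensive.

(* A simple graph on vertex set [n] = 'I_n is given by its edge set:
   a set of 2-element subsets of 'I_n. *)
Definition simple_graph (n : nat) (E : {set {set 'I_n}}) : bool :=
  [forall e in E, #|e| == 2].

Definition induced_adj (n : nat) (E : {set {set 'I_n}}) (W : {set 'I_n}) : rel 'I_n :=
  fun x y => [&& x \in W, y \in W & [set x; y] \in E].

Definition n_edges_on (n : nat) (E : {set {set 'I_n}}) (W : {set 'I_n}) : nat :=
  #|[set e in E | e \subset W]|.

Definition n_components_on (n : nat) (E : {set {set 'I_n}}) (W : {set 'I_n}) : nat :=
  n_comp (induced_adj E W) (mem W).

(* Cycle rank e(G[W]) - v(G[W]) + kappa(G[W]); the truncated nat subtraction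
   is harmless since e + kappa >= v always holds. *)
Definition cycle_rank_on (n : nat) (E : {set {set 'I_n}}) (W : {set 'I_n}) : nat :=
  (n_edges_on E W + n_components_on E W - #|W|)%N.

Definition in_Fg_on (g : nat -> nat) (n : nat) (E : {set {set 'I_n}}) (W : {set 'I_n}) : bool :=
  (cycle_rank_on E W <= g #|W|)%N.

Definition in_Fg (g : nat -> nat) (n : nat) (E : {set {set 'I_n}}) : bool :=
  in_Fg_on g E [set: 'I_n].

Definition in_Hered_Fg (g : nat -> nat) (n : nat) (E : {set {set 'I_n}}) : bool :=
  [forall W : {set 'I_n}, (W != set0) ==> in_Fg_on g E W].

Definition count_Hered_Fg (g : nat -> nat) (n : nat) : nat :=
  #|[set E : {set {set 'I_n}} | simple_graph E && in_Hered_Fg g E]|.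

From mathcomp Require Import all_boot fingroup perm zify.
From Stdlib Require Import Reals Lra.

(* Lay the n vertices out along a Hamiltonian path (n! ways) and add h chords,
   the j-th joining path positions jD and (h + p j)D for a permutation p of
   [0, h) (h! ways); a graph built this way determines its pair (path, p) up to
   n 2^(n-1+h) choices.  In an induced subgraph G[W], the path edges inside W,
   the components, and the chords inside W whose right end is not preceded by
   D consecutive path vertices of W are charged injectively to pairwise
   distinct vertices of W (the later end of the edge, the first vertex of the
   component along the path, the first vertex of the W-run ending at the chord).
   Hence the cycle rank of G[W] is at most the number of remaining chords, which
   is at most |W|/D.  With D ~ (log2 n)/c and h ~ n/2D, the hypothesis
   g(w) >= c w/ln w gives |W|/D <= g(|W|), while h! >= 2^((B+3)n) once
   c = 16(B+4); so |Hered(F^g)_n| >= n! B^n for every B and n large. *)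

Set Implicit Arguments.
Unset Strict Implicit.
Unset Printing Implicit Defensive.

(* [Reals] rebinds [^] on [nat] to [Nat.pow]. *)
Local Notation "m ^ n" := (expn m n) : nat_scope.

Lemma set2_eq_cases (T : finType) (a b c d : T) :
  [set a; b] = [set c; d] -> (a = c /\ b = d) \/ (a = d /\ b = c).
Proof.
move=> E.
have ha : a \in [set c; d] by rewrite -E set21.
have hb : b \in [set c; d] by rewrite -E set22.
have hc : c \in [set a; b] by rewrite E set21.
have hd : d \in [set a; b] by rewrite E set22.
case/set2P: ha => ea; case/set2P: hb => eb; subst; auto;
by case/set2P: hc => ec; case/set2P: hd => ed; subst; auto.
Qed.

Lemma expn_subn_leq_fact b k : b ^ (k - b) <= k`!.
Proof.
elim: k => [|k IH]; first by rewrite sub0n expn0.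
case: (leqP b k) => hbk.
  by rewrite subSn // expnS factS; apply: leq_mul => //; lia.
have -> : k.+1 - b = 0 by lia.
by rewrite expn0 fact_gt0.
Qed.

Section ComponentsByRank.
Variables (T : finType) (e : rel T) (W : {set T}) (r : T -> nat).
Hypothesis e_sym : symmetric e.
Hypothesis e_in : forall x y, e x y -> (x \in W) && (y \in W).

Definition rank_dominated (v : T) : bool :=
  [exists u, [&& u \in W, r u < r v & connect e v u]].

Lemma n_comp_le_rank_minima :
  n_comp e (mem W) <= #|[set v in W | ~~ rank_dominated v]|.
Proof.
have csym := sym_connect_sym e_sym.
have closedW : closed e W by move=> x y /e_in /andP[-> ->].
pose f x := [arg min_(u < x | connect e x u) r u].
have fP x : connect e x (f x) /\ forall u, connect e x u -> r (f x) <= r u.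
  by rewrite /f; case: arg_minnP => // i Hi Hm; split.
set A := [set x | roots e x && (x \in W)].
have -> : n_comp e (mem W) = #|A| by apply: eq_card => x; rewrite !inE.
have injf : {in A &, injective f}.
  move=> x y; rewrite !inE => /andP[/eqP rx _] /andP[/eqP ry _] fxy.
  have [cx _] := fP x; have [cy _] := fP y.
  have cxy : connect e x y by rewrite fxy in cx; apply: connect_trans cx _; rewrite csym.
  by rewrite -rx -ry; apply/rootP.
rewrite -(card_in_imset injf); apply/subset_leq_card/subsetP => _ /imsetP[x xA ->].
move: xA; rewrite /A !inE => /andP[_ xW]; have [cx min_fx] := fP x.
rewrite -(closed_connect closedW cx) xW /=.
apply/negP => /existsP[u /and3P[_ ru cu]].
by have := min_fx u (connect_trans cx cu); lia.
Qed.

End ComponentsByRank.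

Section ChordGraph.
Variables (m D h : nat).
Hypothesis D_ge2 : 2 <= D.
Hypothesis chords_fit : 2 * h * D <= m.+1.

Definition vtx (s : {perm 'I_m.+1}) (i : nat) : 'I_m.+1 := s (inord i).
Definition pos (s : {perm 'I_m.+1}) (v : 'I_m.+1) : nat := (s^-1)%g v.

Lemma vtx_inj s i j : i <= m -> j <= m -> vtx s i = vtx s j -> i = j.
Proof.
by move=> hi hj /perm_inj E; rewrite -(@inordK m i) // -(@inordK m j) // E.
Qed.

Lemma posK s v : vtx s (pos s v) = v.
Proof. by rewrite /vtx /pos inord_val permKV. Qed.

Lemma vtxK s i : i <= m -> pos s (vtx s i) = i.
Proof. by move=> hi; rewrite /vtx /pos permK inordK. Qed.

Lemma pos_le s v : pos s v <= m.
Proof. by rewrite /pos -ltnS ltn_ord. Qed.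

Definition chord_end (p : {perm 'I_h}) (j : 'I_h) : nat := (h + p j) * D.

Lemma chord_end_le p j : chord_end p j <= m.
Proof.
rewrite /chord_end; have := ltn_ord (p j); have := ltn_ord j => h1 h2.
have : (h + p j).+1 * D <= 2 * h * D by apply: leq_mul => //; lia.
nia.
Qed.

Lemma chord_end_ge p (j : 'I_h) : j * D + D <= chord_end p j.
Proof.
rewrite /chord_end; have := ltn_ord j => h1.
have : j.+1 * D <= (h + p j) * D by apply: leq_mul => //; lia.
rewrite mulSn; lia.
Qed.

Lemma chord_start_le (j : 'I_h) : j * D <= m.
Proof. have := chord_end_ge 1%g j; have := chord_end_le 1%g j; lia. Qed.

Lemma chord_end_eq p p' (j j' : 'I_h) t t' : t < D -> t' < D ->
  chord_end p j - t = chord_end p' j' - t' -> p j = p' j' /\ t = t'.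
Proof.
move=> ht ht'; rewrite /chord_end => e.
have big q : D <= (h + q) * D by rewrite leq_pmull //; have := ltn_ord j; lia.
have := big (p j); have := big (p' j') => b' b.
have h1 : h + p j < (h + p' j').+1 by rewrite -(ltn_pmul2r (ltnW D_ge2)) mulSn; lia.
have h2 : h + p' j' < (h + p j).+1 by rewrite -(ltn_pmul2r (ltnW D_ge2)) mulSn; lia.
have ep : p j = p' j' :> nat by lia.
by split; [apply: ord_inj | move: e b; rewrite ep; lia].
Qed.

Definition path_edges s := [set [set vtx s i; vtx s i.+1] | i : 'I_m].
Definition chord_edges s p := [set [set vtx s (j * D); vtx s (chord_end p j)] | j : 'I_h].
Definition chord_graph s p := path_edges s :|: chord_edges s p.

Lemma chord_graph_simple s p : simple_graph (chord_graph s p).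
Proof.
apply/forall_inP => e; rewrite inE => /orP[] /imsetP[i _ ->].
  suff Hne : vtx s i != vtx s i.+1 by rewrite cards2 Hne.
  apply/eqP => /(vtx_inj (ltnW (ltn_ord i)) (ltn_ord i)); lia.
suff Hne : vtx s (i * D) != vtx s (chord_end p i) by rewrite cards2 Hne.
apply/eqP => /(vtx_inj (chord_start_le i) (chord_end_le p i)).
have := chord_end_ge p i; lia.
Qed.

Lemma path_edge_in s p i : i < m -> [set vtx s i; vtx s i.+1] \in chord_graph s p.
Proof. by move=> hi; rewrite inE; apply/orP; left; apply/imsetP; exists (Ordinal hi). Qed.

Lemma chord_edge_in s p (j : 'I_h) :
  [set vtx s (j * D); vtx s (chord_end p j)] \in chord_graph s p.
Proof. by rewrite inE; apply/orP; right; apply/imsetP; exists j. Qed.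

Section InducedSubgraph.
Variables (s : {perm 'I_m.+1}) (p : {perm 'I_h}) (W : {set 'I_m.+1}).
Local Notation G := (chord_graph s p).
Local Notation adjW := (induced_adj G W).

Lemma adjW_sym : symmetric adjW.
Proof. by move=> x y; rewrite /induced_adj setUC andbCA. Qed.

Lemma adjW_in x y : adjW x y -> (x \in W) && (y \in W).
Proof. by case/and3P => -> ->. Qed.

Lemma connect_run a d : a + d <= m ->
  (forall k, a <= k <= a + d -> vtx s k \in W) -> connect adjW (vtx s a) (vtx s (a + d)).
Proof.
elim: d => [|d IH] hle hW; first by rewrite addn0 connect0.
apply: connect_trans (IH _ _) _; [lia | by move=> k hk; apply: hW; lia |].
apply: connect1; rewrite /induced_adj addnS !hW ?path_edge_in //; lia.
Qed.

Definition path_edgesW := [set i : 'I_m | (vtx s i \in W) && (vtx s i.+1 \in W)].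
Definition chordsW := [set j : 'I_h | (vtx s (j * D) \in W) && (vtx s (chord_end p j) \in W)].
Definition full_block (j : 'I_h) := [forall t : 'I_D, vtx s (chord_end p j - t) \in W].
Definition full_chords := [set j in chordsW | full_block j].
Definition partial_chords := [set j in chordsW | ~~ full_block j].
Definition with_predW := [set v in W | (0 < pos s v) && (vtx s (pos s v).-1 \in W)].
Definition rank_minimaW := [set v in W | ~~ rank_dominated adjW W (pos s) v].

Lemma n_edges_on_le : n_edges_on G W <= #|path_edgesW| + #|chordsW|.
Proof.
have sub : [set e in G | e \subset W] \subset
    [set [set vtx s i; vtx s i.+1] | i : 'I_m in path_edgesW] :|:
    [set [set vtx s (j * D); vtx s (chord_end p j)] | j : 'I_h in chordsW].
  apply/subsetP => e; rewrite !inE => /andP[].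
  by case/orP => /imsetP[i _ ->] /subsetP sub; apply/orP; [left | right];
    apply/imsetP; exists i => //; rewrite inE !sub ?set21 ?set22.
apply: leq_trans (subset_leq_card sub) _.
by apply: leq_trans (leq_card_setU _ _) _; apply: leq_add; apply: leq_imset_card.
Qed.

Lemma card_path_edgesW : #|path_edgesW| <= #|with_predW|.
Proof.
have inj : {in path_edgesW &, injective (fun i : 'I_m => vtx s i.+1)}.
  by move=> i j _ _ /(vtx_inj (ltn_ord i) (ltn_ord j)) [] /val_inj.
rewrite -(card_in_imset inj); apply/subset_leq_card/subsetP => v /imsetP[i].
by rewrite inE => /andP[h1 h2] ->; rewrite inE h2 vtxK //= h1.
Qed.

Lemma card_full_chords : #|full_chords| * D <= #|W|.
Proof.
pose f (x : 'I_h * 'I_D) := vtx s (chord_end p x.1 - x.2).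
have inj : {in setX full_chords [set: 'I_D] &, injective f}.
  move=> [j t] [j' t'] _ _; rewrite /f /= => /vtx_inj e.
  have := chord_end_le p j; have := chord_end_le p j'.
  have := chord_end_ge p j; have := chord_end_ge p j' => g' g l' l.
  have {}e := e ltac:(lia) ltac:(lia).
  by have [/perm_inj -> /val_inj ->] := chord_end_eq (ltn_ord t) (ltn_ord t') e.
have := card_in_imset inj; rewrite cardsX cardsT card_ord => <-.
apply/subset_leq_card/subsetP => v /imsetP[[j t]].
by rewrite !inE /= => /andP[/andP[_ /forallP full] _] ->; apply: full.
Qed.

Fixpoint run_start (k q : nat) : nat :=
  if k is k'.+1 then
    if (0 < q) && (vtx s q.-1 \in W) then run_start k' q.-1 else q
  else q.

Lemma run_startP k q : vtx s q \in W ->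
  [/\ run_start k q <= q <= run_start k q + k,
      (forall t, run_start k q <= t <= q -> vtx s t \in W) &
      [|| run_start k q + k == q, run_start k q == 0 | vtx s (run_start k q).-1 \notin W]].
Proof.
elim: k q => [|k IH] q hq /=.
  by split; [lia | move=> t ht; have -> : t = q by lia | rewrite addn0 eqxx].
case: ifP => [/andP[q0 hq1]|hn].
  have [h1 h2 h3] := IH _ hq1; split; first by lia.
    move=> t ht; case: (ltnP t q) => htq; first by apply: h2; lia.
    by have -> : t = q by lia.
  by case/or3P: h3 => [/eqP e|->|->]; rewrite ?orbT // addnS e prednK ?eqxx.
split; [lia | by move=> t ht; have -> : t = q by lia |].
by case: (posnP q) => [-> //|q0]; rewrite q0 /= in hn; rewrite hn !orbT.
Qed.

Definition chord_run_start (j : 'I_h) := run_start D.-1 (chord_end p j).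

Lemma chord_run_startP (j : 'I_h) : j \in partial_chords ->
  [/\ vtx s (chord_run_start j) \in W, vtx s (chord_run_start j) \notin with_predW,
      rank_dominated adjW W (pos s) (vtx s (chord_run_start j)) &
      chord_run_start j <= chord_end p j <= chord_run_start j + D.-1].
Proof.
rewrite !inE => /andP[/andP[hj hq] nf].
have [b12 b3 b4] := run_startP D.-1 hq; rewrite -/(chord_run_start j) in b12 b3 b4.
set b := chord_run_start j in b12 b3 b4 *.
have := chord_end_le p j; have := chord_end_ge p j => qg qm.
have bpos : 0 < b by lia.
have nW : vtx s b.-1 \notin W.
  case/or3P: b4 => [/eqP e|/eqP e|//]; last by lia.
  by case/negP: nf; apply/forallP => t; apply: b3; have := ltn_ord t; lia.
have bW : vtx s b \in W by apply: b3; lia.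
have bm : b <= m by lia.
split => //; first by rewrite bW vtxK // bpos.
apply/existsP; exists (vtx s (j * D)).
rewrite hj vtxK ?chord_start_le // vtxK /=; last by lia.
apply/andP; split; first by lia.
apply: (@connect_trans _ _ (vtx s (chord_end p j))).
  have -> : chord_end p j = b + (chord_end p j - b) by lia.
  by apply: connect_run; [lia | move=> k hk; apply: b3; lia].
by apply: connect1; rewrite /induced_adj hq hj setUC chord_edge_in.
Qed.

Lemma chord_run_start_inj : {in partial_chords &, injective (vtx s \o chord_run_start)}.
Proof.
move=> j j' hj hj' /= /vtx_inj e.
have [_ _ _ /andP[c1 c2]] := chord_run_startP hj.
have [_ _ _ /andP[c3 c4]] := chord_run_startP hj'.
have := chord_end_le p j; have := chord_end_le p j' => q q'.
have {}e := e ltac:(lia) ltac:(lia).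
have hD : D.-1 < D by lia.
have [/perm_inj ->] // := @chord_end_eq p p j j' (chord_end p j - chord_run_start j)
  (chord_end p j' - chord_run_start j') ltac:(lia) ltac:(lia) ltac:(lia).
Qed.

Lemma charged_vertices_le :
  #|with_predW| + #|partial_chords| + #|rank_minimaW| <= #|W|.
Proof.
set R := [set vtx s (chord_run_start j) | j in partial_chords].
have -> : #|partial_chords| = #|R| by rewrite (card_in_imset chord_run_start_inj).
have dominated v : v \in with_predW -> rank_dominated adjW W (pos s) v.
  rewrite inE => /andP[vW /andP[p0 pW]]; have := pos_le s v => pv.
  apply/existsP; exists (vtx s (pos s v).-1); rewrite pW vtxK /=; last by lia.
  apply/andP; split; first by lia.
  apply: connect1; rewrite /induced_adj vW pW /=.
  by have := @path_edge_in s p (pos s v).-1 ltac:(lia); rewrite prednK // posK setUC.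
have disj1 : [disjoint with_predW & R].
  rewrite disjoint_sym disjoints_subset; apply/subsetP => _ /imsetP[j hj ->].
  by rewrite inE; have [] := chord_run_startP hj.
have disj2 : [disjoint with_predW :|: R & rank_minimaW].
  rewrite disjoints_subset; apply/subsetP => x hx.
  rewrite inE /rank_minimaW inE negb_and negbK; apply/orP; right.
  case/setUP: hx => [|/imsetP[j hj ->]]; first exact: dominated.
  by have [] := chord_run_startP hj.
move: disj1 disj2; rewrite -(leq_card_setU with_predW R).2 => /eqP <-.
rewrite -(leq_card_setU (with_predW :|: R) rank_minimaW).2 => /eqP <-.
apply/subset_leq_card/subsetP => x /setUP[/setUP[|/imsetP[j hj ->]]|].
- by rewrite inE => /andP[].
- by have [] := chord_run_startP hj.
- by rewrite inE => /andP[].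
Qed.

Lemma cycle_rank_le_full_chords : cycle_rank_on G W <= #|full_chords|.
Proof.
rewrite /cycle_rank_on /n_components_on leq_subLR.
have : n_comp adjW (mem W) <= #|rank_minimaW|.
  exact: n_comp_le_rank_minima adjW_sym adjW_in.
have := n_edges_on_le; have := card_path_edgesW; have := charged_vertices_le.
have := cardsID [set j | full_block j] chordsW.
have -> : chordsW :&: [set j | full_block j] = full_chords.
  by apply/setP => j; rewrite !inE.
have -> : chordsW :\: [set j | full_block j] = partial_chords.
  by apply/setP => j; rewrite !inE andbC.
lia.
Qed.

End InducedSubgraph.

Lemma path_edges_inj s s' : vtx s 0 = vtx s' 0 -> path_edges s = path_edges s' -> s = s'.
Proof.
move=> e0 eP.
have key i : i <= m -> forall k, k <= i -> vtx s k = vtx s' k.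
  elim: i => [|i IH] hi k hk; first by have -> : k = 0 by lia.
  case: (leqP k i) => hki; first by apply: IH => //; lia.
  have -> : k = i.+1 by lia.
  have : [set vtx s' i; vtx s' i.+1] \in path_edges s' by apply/imsetP; exists (Ordinal hi).
  rewrite -eP -(IH (ltnW hi) i (leqnn i)) => /imsetP[l _ El]; have hl := ltn_ord l.
  case: (set2_eq_cases El) => [[a b]|[a b]].
    by rewrite b -(vtx_inj (ltnW hi) (ltnW hl) a).
  have il := vtx_inj (ltnW hi) hl a.
  rewrite (IH (ltnW hi) l ltac:(lia)) in b.
  by have := vtx_inj hi (ltnW hl) b; lia.
apply/permP => x; have := key m (leqnn m) x (leq_ord x).
by rewrite /vtx inord_val.
Qed.

Lemma chord_graph_inj s p p' : chord_graph s p = chord_graph s p' -> p = p'.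
Proof.
move=> eG; apply/permP => j; apply: ord_inj.
have : [set vtx s (j * D); vtx s (chord_end p j)] \in chord_graph s p'.
  by rewrite -eG chord_edge_in.
have q1 := chord_end_ge p j; have q2 := chord_end_le p j; have q3 := chord_start_le j.
rewrite inE => /orP[] /imsetP[l _ El]; have hl := ltn_ord l.
  case: (set2_eq_cases El) => [[a b]|[a b]].
    by have := vtx_inj q3 (ltnW hl) a; have := vtx_inj q2 hl b; lia.
  by have := vtx_inj q3 hl a; have := vtx_inj q2 (ltnW hl) b; lia.
have r1 := chord_end_ge p' l; have r2 := chord_end_le p' l; have r3 := chord_start_le l.
case: (set2_eq_cases El) => [[a b]|[a b]].
  have jl : j = l.
    apply/ord_inj/eqP; rewrite -(eqn_pmul2r (ltnW D_ge2)).
    by rewrite (vtx_inj q3 r3 a).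
  subst l; have := vtx_inj q2 r2 b; rewrite /chord_end => /eqP.
  by rewrite eqn_pmul2r ?(ltnW D_ge2) // => /eqP; lia.
have := vtx_inj q3 r2 a; have := ltn_ord j; have := ltn_ord (p' l).
rewrite /chord_end => hx hy e1.
have : j * D < h * D by rewrite ltn_pmul2r ?(ltnW D_ge2).
nia.
Qed.

Lemma card_chord_graph s p : #|chord_graph s p| <= m + h.
Proof.
apply: leq_trans (leq_card_setU _ _) _.
by apply: leq_add; apply: leq_trans (leq_imset_card _ _) _; rewrite card_ord.
Qed.

(* A graph determines [s] from its first vertex and its path edges, and then [p]. *)
Lemma card_chord_graph_fiber (G : {set {set 'I_m.+1}}) :
  #|[set x : {perm 'I_m.+1} * {perm 'I_h} | chord_graph x.1 x.2 == G]|
    <= m.+1 * 2 ^ (m + h).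
Proof.
set F := [set x | _].
case: (set_0Vmem F) => [->|[x0 x0F]]; first by rewrite cards0.
have hG : #|G| <= m + h by move: x0F; rewrite inE => /eqP <-; apply: card_chord_graph.
pose f (x : {perm 'I_m.+1} * {perm 'I_h}) := (vtx x.1 0, path_edges x.1).
have inj : {in F &, injective f}.
  move=> [s1 p1] [s2 p2]; rewrite !inE /f /= => /eqP e1 /eqP e2 [] a b.
  have es := path_edges_inj a b; subst s2.
  by rewrite (chord_graph_inj (etrans e1 (esym e2))).
rewrite -(card_in_imset inj).
apply: (@leq_trans #|setX [set: 'I_m.+1] (powerset G)|).
  apply/subset_leq_card/subsetP => y /imsetP[[s1 p1]].
  rewrite inE /= => /eqP e ->; rewrite in_setX in_setT /= powersetE -e.
  by apply/subsetP => z zin; rewrite inE zin.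
rewrite cardsX cardsT card_ord card_powerset leq_mul2l; apply/orP; right.
by rewrite leq_exp2l.
Qed.

Lemma chord_graph_Hered (g : nat -> nat) s p :
  (forall w, 0 < w <= m.+1 -> w %/ D <= g w) -> in_Hered_Fg g (chord_graph s p).
Proof.
move=> g_ge; apply/forallP => W; apply/implyP => W0.
apply: leq_trans (cycle_rank_le_full_chords s p W) _; apply: leq_trans (g_ge _ _).
  by rewrite leq_divRL ?card_full_chords //; lia.
by rewrite card_gt0 W0 /=; have := max_card (mem W); rewrite card_ord.
Qed.

Lemma count_Hered_Fg_ge_chord_graphs (g : nat -> nat) :
  (forall w, 0 < w <= m.+1 -> w %/ D <= g w) ->
  m.+1`! * h`! <= count_Hered_Fg g m.+1 * (m.+1 * 2 ^ (m + h)).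
Proof.
move=> g_ge.
set img := [set chord_graph x.1 x.2 | x : {perm 'I_m.+1} * {perm 'I_h}].
have sub : img \subset [set E | simple_graph E && in_Hered_Fg g E].
  apply/subsetP => _ /imsetP[[s p] _ ->].
  by rewrite inE chord_graph_simple chord_graph_Hered.
apply: leq_trans _ (leq_mul (subset_leq_card sub) (leqnn _)).
rewrite -card_Sn -card_Sn -card_prod.
have -> : #|{: {perm 'I_m.+1} * {perm 'I_h}}| = \sum_(x : {perm 'I_m.+1} * {perm 'I_h}) 1.
  by rewrite sum1_card.
rewrite (partition_big (fun x => chord_graph x.1 x.2) (mem img)); last first.
  by move=> x _; apply/imsetP; exists x.
rewrite -sum_nat_const; apply: leq_sum => G _.
apply: leq_trans _ (card_chord_graph_fiber G).
by rewrite sum1dep_card; apply/eq_leq/eq_card => x; rewrite !inE.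
Qed.

End ChordGraph.

Lemma expn_leq_fact_half k h : 2 ^ k <= h %/ 2 -> 2 ^ (k * (h %/ 2)) <= h`!.
Proof.
move=> hk; apply: leq_trans (expn_subn_leq_fact (2 ^ k) h).
rewrite expnM; apply: leq_pexp2l; first by rewrite expn_gt0.
have := divn_eq h 2; lia.
Qed.

Lemma linear_le_expn2 k : 6 <= k -> 4 * (2 * k + 1) <= 2 ^ k.
Proof.
elim: k => // k IH hk; case: (ltnP 6 k.+1) => h6.
  by have := IH h6; rewrite expnS; lia.
by have -> : k = 5 by lia.
Qed.

Definition block_len (c n : nat) : nat := trunc_log 2 n %/ c + 1.
Definition n_chords (c n : nat) : nat := n %/ (2 * block_len c n).

Section ChordParameters.
Variables (c n : nat).
Hypothesis c_gt1 : 1 < c.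
Hypothesis log_large : c * (c + 2) + 14 <= trunc_log 2 n.
Local Notation a := (trunc_log 2 n).
Local Notation D := (block_len c n).
Local Notation h := (n_chords c n).

Lemma trunc_log2_bounds : 2 ^ a <= n < 2 ^ a.+1.
Proof.
have n_gt0 : 0 < n by case: n log_large => //; rewrite trunc_log0; lia.
by have /andP[-> ->] := trunc_log_bounds (isT : 1 < 2) n_gt0.
Qed.

Lemma block_len_bounds : [/\ a < c * D <= a + c & c + 3 <= D <= a].
Proof.
have := divn_eq a c; have : a %% c < c by rewrite ltn_mod; lia.
have : c + 2 <= a %/ c by rewrite leq_divRL; lia.
rewrite /block_len; set q := a %/ c; set r := a %% c => q_ge r_lt ea.
have : q * 2 <= q * c by rewrite leq_mul2l; apply/orP; right.
split; apply/andP; split; lia.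
Qed.

Lemma n_chords_bounds : 2 * D * h <= n < 2 * D * h.+1.
Proof.
have [_ /andP[D_ge _]] := block_len_bounds.
by rewrite /n_chords mulnC leq_divM /= mulnC ltn_ceil //; lia.
Qed.

Lemma expn_half_log_le_half_chords : 2 ^ (a %/ 2) <= h %/ 2.
Proof.
set k := a %/ 2; set x := h %/ 2.
have [_ /andP[_ Da]] := block_len_bounds.
have /andP[an _] := trunc_log2_bounds; have /andP[_ nh] := n_chords_bounds.
have := divn_eq a 2; have := divn_eq h 2; rewrite -/k -/x => eh ea.
have k6 : 6 <= k by lia.
have kk : 2 ^ k * 2 ^ k <= 2 ^ a by rewrite -expnD leq_exp2l //; lia.
have P_ge := linear_le_expn2 k6.
rewrite leqNgt; apply/negP => x_lt.
have : 2 * D * h.+1 <= 2 * (2 * k + 1) * (2 * 2 ^ k).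
  by apply: leq_mul; [apply: leq_mul => //; lia | lia].
have : 4 * (2 * k + 1) * 2 ^ k <= 2 ^ k * 2 ^ k by apply: leq_mul.
lia.
Qed.

Lemma half_log_mul_half_chords_ge B : 16 * (B + 4) <= c ->
  (B + 3) * n <= a %/ 2 * (h %/ 2).
Proof.
move=> c_ge; set k := a %/ 2; set x := h %/ 2.
have [/andP[aD Dc] /andP[D_ge Da]] := block_len_bounds.
have /andP[an _] := trunc_log2_bounds; have /andP[hn nh] := n_chords_bounds.
have := divn_eq a 2; have := divn_eq h 2; rewrite -/k -/x => eh ea.
have an' : a <= n by apply: leq_trans (ltnW (ltn_expl _ _)) an.
have f4 : c * n < c * (4 * D * (x + 1)).
  rewrite ltn_pmul2l; last lia; apply: leq_trans nh _.
  have : 2 * D * h.+1 <= 2 * D * (2 * (x + 1)) by rewrite leq_mul2l; lia.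
  lia.
have f6 : c * D * (x + 1) <= (a + c) * (x + 1) by apply: leq_mul.
have f1 : a * x <= (2 * k + 1) * x by apply: leq_mul => //; lia.
have f2 : (c + 1) * x <= D * x by apply: leq_mul => //; lia.
have f3 : D * (2 * x) <= D * h by apply: leq_mul => //; lia.
have f0 : 16 * (B + 4) * n <= c * n by apply: leq_mul.
lia.
Qed.

Lemma fact_n_chords_ge B : 16 * (B + 4) <= c -> 2 ^ ((B + 3) * n) <= h`!.
Proof.
move=> c_ge; apply: leq_trans (expn_leq_fact_half expn_half_log_le_half_chords).
by rewrite leq_exp2l // half_log_mul_half_chords_ge.
Qed.

End ChordParameters.

Lemma INR_expn x k : INR (x ^ k) = (INR x ^ k)%R.
Proof. by elim: k => [|k IH]; rewrite ?expn0 // expnS mult_INR IH. Qed.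

Lemma ln_lt_of_lt_expn2 w a : 0 < w -> w < 2 ^ a -> (ln (INR w) < INR a)%R.
Proof.
move=> w_gt0 w_lt.
have a_gt0 : (0 < INR a)%R.
  by apply: lt_0_INR; apply/ltP; case: a w_lt => //; rewrite expn0; lia.
have ln2_lt1 : (ln 2 < 1)%R.
  rewrite -[X in (_ < X)%R]ln_exp; apply: ln_increasing; first lra.
  by have := exp_ineq1 1 ltac:(lra); lra.
have : (ln (INR w) < ln (INR (2 ^ a)))%R.
  by apply: ln_increasing; [apply: lt_0_INR | apply: lt_INR]; apply/ltP.
have INR2 : INR 2 = 2%R by rewrite /=; lra.
rewrite INR_expn INR2 ln_pow; [nra | lra].
Qed.

Lemma le_mul_of_ln_le w c D gw : 1 < w -> 0 < c ->
  (ln (INR w) <= INR (c * D))%R -> (INR w / ln (INR w) <= / INR c * INR gw)%R ->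
  w <= gw * D.
Proof.
move=> w_gt1 c_gt0 ln_le w_le.
have c_pos : (0 < INR c)%R by apply: lt_0_INR; apply/ltP.
have L_pos : (0 < ln (INR w))%R.
  by rewrite -ln_1; apply: ln_increasing; [lra | apply: lt_1_INR; apply/ltP].
set L := ln (INR w) in L_pos ln_le w_le *.
set k := (/ INR c * INR gw)%R in w_le.
have k_ge0 : (0 <= k)%R by apply: Rmult_le_pos; [apply/Rlt_le/Rinv_0_lt_compat | apply: pos_INR].
have wL : (INR w / L * L = INR w)%R by field; lra.
have kc : (k * (INR c * INR D) = INR gw * INR D)%R by rewrite /k; field; lra.
apply/leP/INR_le; rewrite !mult_INR in ln_le *; nra.
Qed.

Lemma genus_ge_div_block_len (g : nat -> nat) c n N1 :
  1 < c -> c * (c + 2) + 14 <= trunc_log 2 n -> N1 <= block_len c n ->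
  (forall w, N1 <= w -> (INR w / ln (INR w) <= / INR c * INR (g w))%R) ->
  forall w, 0 < w <= n -> w %/ block_len c n <= g w.
Proof.
move=> c_gt1 log_large N1_le g_ge w /andP[w_gt0 w_le].
have [/andP[aD _] /andP[D_ge _]] := block_len_bounds c_gt1 log_large.
have /andP[_ n_lt] := trunc_log2_bounds c_gt1 log_large.
case: (ltnP w (block_len c n)) => [w_lt | w_ge]; first by rewrite divn_small.
apply: (@leq_trans (g w * block_len c n %/ block_len c n)); last by rewrite mulnK //; lia.
apply/leq_div2r/le_mul_of_ln_le/g_ge; try lia.
apply/Rlt_le/(Rlt_le_trans _ _ _ (ln_lt_of_lt_expn2 w_gt0 (leq_ltn_trans w_le n_lt))).
by apply/le_INR/leP.
Qed.

Lemma le_Rpower_inv (B c f n : nat) : 0 < B -> 0 < n -> 0 < f -> f * B ^ n <= c ->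
  (INR B <= Rpower (INR c / INR f) (/ INR n))%R.
Proof.
move=> B_gt0 n_gt0 f_gt0 le_c.
have B_pos : (0 < INR B)%R by apply: lt_0_INR; apply/ltP.
have n_pos : (0 < INR n)%R by apply: lt_0_INR; apply/ltP.
have f_pos : (0 < INR f)%R by apply: lt_0_INR; apply/ltP.
have -> : INR B = Rpower (INR B ^ n) (/ INR n).
  by rewrite -Rpower_pow // Rpower_mult Rinv_r ?Rpower_1 //; lra.
apply: Rle_Rpower_l; first by apply/Rlt_le/Rinv_0_lt_compat.
split; first exact: pow_lt.
have cf : (INR c / INR f * INR f = INR c)%R by field; lra.
have : (INR f * INR B ^ n <= INR c)%R by rewrite -INR_expn -mult_INR; apply/le_INR/leP.
nra.
Qed.

Lemma count_Hered_Fg_ge (g : nat -> nat) B N1 :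
  (forall w, N1 <= w -> (INR w / ln (INR w) <= / INR (16 * (B + 4)) * INR (g w))%R) ->
  exists N, forall n, N <= n -> 0 < n /\ n`! * B ^ n <= count_Hered_Fg g n.
Proof.
set c := 16 * (B + 4) => g_ge.
exists (2 ^ (c * (N1 + c + 2) + 14)) => -[|m] N_le; first by move: N_le; rewrite leqn0 expn_eq0.
split => //; set n := m.+1.
have log_ge : c * (N1 + c + 2) + 14 <= trunc_log 2 n by apply: trunc_log_max.
have log_large : c * (c + 2) + 14 <= trunc_log 2 n by apply: leq_trans log_ge; nia.
have c_gt1 : 1 < c by rewrite /c; lia.
set D := block_len c n; set h := n_chords c n.
have [_ /andP[D_ge _]] := block_len_bounds c_gt1 log_large.
have /andP[fit _] := n_chords_bounds c_gt1 log_large.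
have h_le : h <= n by apply: leq_trans fit; rewrite leq_pmull //; lia.
have N1_le : N1 <= D.
  rewrite /D /block_len; have : N1 + c + 2 <= trunc_log 2 n %/ c by rewrite leq_divRL; lia.
  lia.
have lower := count_Hered_Fg_ge_chord_graphs (m := m) (D := D) (h := h) ltac:(lia) ltac:(lia)
  (genus_ge_div_block_len c_gt1 log_large N1_le g_ge).
have overhead : B ^ n * (n * 2 ^ (m + h)) <= 2 ^ ((B + 3) * n).
  have : B ^ n <= 2 ^ (B * n) by rewrite expnM leq_exp2r // ltnW // ltn_expl.
  have : n <= 2 ^ n by rewrite ltnW // ltn_expl.
  have : 2 ^ (m + h) <= 2 ^ (2 * n) by rewrite leq_exp2l //; lia.
  move=> e1 e2 e3; apply: leq_trans (leq_mul e3 (leq_mul e2 e1)) _.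
  by rewrite -!expnD leq_exp2l //; lia.
rewrite -(@leq_pmul2r (n * 2 ^ (m + h))) ?muln_gt0 ?expn_gt0 //.
apply: leq_trans _ lower; rewrite -mulnA leq_mul2l; apply/orP; right.
exact: leq_trans overhead (fact_n_chords_ge c_gt1 log_large (leqnn c)).
Qed.

Theorem theorem5 (g : nat -> nat) :
  (* g(n) >> n / log n *)
  (forall eps : R, (0 < eps)%R ->
     exists N : nat, forall n : nat, (N <= n)%N ->
       (INR n / ln (INR n) <= eps * INR (g n))%R) ->
  (* (|Hered(F^g)_n| / n!)^(1/n) -> +infinity *)
  forall M : R, exists N : nat, forall n : nat, (N <= n)%N ->
    (M <= Rpower (INR (count_Hered_Fg g n) / INR (n`!)) (/ INR n))%R.
Proof.
move=> g_big M.
have [B M_lt] := INR_unbounded M.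
have [N1 g_ge] : exists N1, forall w, N1 <= w ->
    (INR w / ln (INR w) <= / INR (16 * (B.+1 + 4)) * INR (g w))%R.
  by apply/g_big/Rinv_0_lt_compat/lt_0_INR/ltP.
have [N count_ge] := count_Hered_Fg_ge g_ge.
exists N => n N_le; have [n_gt0 le_count] := count_ge n N_le.
apply: Rle_trans (le_Rpower_inv _ n_gt0 (fact_gt0 n) le_count) => //.
by have := S_INR B; lra.
Qed.
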